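(* Assume the following setting. $E$ is a Boolean algebra of propositions (with conjunction $\&$, negation, disjunction), $E_0=E\setminus\{0\}$. $T$ is a commutative algebra with identity over $\mathbb{R}$ containing $\mathbb{R}$, whose elements are called unknown numbers; each $X\in T$ has an actual value $AV(X)\in\mathbb{R}$, where $AV:T\to T$ is a retraction of $T$ onto $\mathbb{R}$. For each $A\in E$, $T$ contains its indicator $I_A$ (the unknown whose actual value is $1$ if $A$ is true and $0$ if $A$ is false), and the indicators form a Boolean algebra of idempotents in $T$, with $I_{A\& B}=I_AI_B$. A plausible value function $PV:T\times E_0\to\mathbb{R}$ is given satisfying: (i) if $X\in T$, $s\in\mathbb{R}$, $A\in E_0$ and $A$ implies $AV(X)=s$, then $PV(X|A)=s$; (ii) if $X,Y\in T$, $A\in E_0$ and $A$ implies $AV(X)=AV(Y)$, then $PV(X|A)=PV(Y|A)$; (iii) if $X,Y\in T$, $C\in E_0$ and $C$ implies $AV(X)\le AV(Y)$, then $PV(X|C)\le PV(Y|C)$; (iv) if $r\in\mathbb{R}$, $C\in E_0$, $X,Y\in T$ and $PV(X|C)=PV(Y|C)$, then $PV(rX|C)=PV(rY|C)$; (v) if $A,C\in E$ (with $A\& C\in E_0$), $X_1,X_2\in T$ and $PV(X_1|A\& C)=PV(X_2|A\& C)$, then $PV(X_1I_A|C)=PV(X_2I_A|C)$. Define the plausibility $PL(A|C)=PV(I_A|C)$ for $A\in E$, $C\in E_0$. Then for all $A,B,C\in E$ with $B\& C\in E_0$, $$PL(A\& B|C)=PL(A|B\& C)\,PL(B|C).$$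
   Context: Propositions are statements that are either true or false; ''$A$ implies (a statement about actual values)'' means that the statement holds whenever $A$ is true. Every real number $r\in T$ satisfies $AV(r)=r$, and any $A$ trivially implies $AV(r)=r$. *)

From HB Require Import structures.
From mathcomp Require Import all_boot all_order all_algebra.
From mathcomp Require Import reals.
Set Implicit Arguments. Unset Strict Implicit. Unset Printing Implicit Defensive.
Import Order.TTheory GRing.Theory Num.Theory.
Local Open Scope ring_scope.

(* Possible-worlds semantics: [truth A w] = proposition A is true in state w.
   "A implies P (a statement about actual values)" means P holds in every
   state where A is true. *)
Definition implies_AV {E Omega : Type} (truth : E -> Omega -> bool) (A : E)
  (P : Omega -> Prop) : Prop :=
  forall w, truth A w -> P w.

Definition PL {E T R : Type} (PV : T -> E -> R) (I : E -> T) (A C : E) : R :=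
  PV (I A) C.

From HB Require Import structures.
From mathcomp Require Import all_boot all_order all_algebra.
From mathcomp Require Import reals.
Import Order.TTheory GRing.Theory Num.Theory.
Local Open Scope ring_scope.

(* Axiom (i) says that a nonzero condition fixes the plausible value of a
   constant, so by (iv) scalars pull out of PV, and by (v) the factor [X] in
   [X * I_A] may be replaced by the constant [PV(X | A & C)]. Hence
   [PV(X I_A | C) = PV(X | A & C) PL(A | C)]; the product rule is the case
   [X = I_A], since [I_(A & B) = I_A I_B]. *)

Set Implicit Arguments.
Unset Strict Implicit.

Section PlausibleValue.

Variables (R : realType) (d : Order.disp_t) (E : ctbDistrLatticeType d).
Variables (T : comAlgType R) (Omega : Type).
Variables (truth : E -> Omega -> bool) (AV : Omega -> T -> R).
Variables (I : E -> T) (PV : T -> E -> R).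

Hypothesis AV_R : forall w (r : R), AV w r%:A = r.
Hypothesis PV_i : forall (X : T) (s : R) (A : E), A != Order.bottom ->
  implies_AV truth A (fun w => AV w X = s) -> PV X A = s.
Hypothesis PV_iv : forall (r : R) (C : E) (X Y : T), C != Order.bottom ->
  PV X C = PV Y C -> PV (r *: X) C = PV (r *: Y) C.
Hypothesis PV_v : forall (A C : E) (X1 X2 : T), Order.meet A C != Order.bottom ->
  PV X1 (Order.meet A C) = PV X2 (Order.meet A C) ->
  PV (X1 * I A) C = PV (X2 * I A) C.

Lemma PV_const (r : R) (C : E) : C != Order.bottom -> PV r%:A C = r.
Proof. by move=> hC; apply: PV_i => // w _; rewrite AV_R. Qed.

Lemma PV_eq_PV_const (X : T) (C : E) :
  C != Order.bottom -> PV X C = PV (PV X C)%:A C.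
Proof. by move=> hC; rewrite PV_const. Qed.

Lemma PV_scale (r : R) (X : T) (C : E) : C != Order.bottom ->
  PV (r *: X) C = r * PV X C.
Proof.
by move=> hC; rewrite (PV_iv r hC (PV_eq_PV_const X hC)) scalerA PV_const // mulr_algl.
Qed.

Lemma PV_mul_indicator (X : T) (A C : E) : Order.meet A C != Order.bottom ->
  PV (X * I A) C = PV X (Order.meet A C) * PV (I A) C.
Proof.
move=> hAC; have hC : C != Order.bottom.
  by apply: contraNneq hAC => ->; rewrite meetx0.
by rewrite (PV_v hAC (PV_eq_PV_const X hAC)) mulr_algl PV_scale.
Qed.

End PlausibleValue.

Theorem mainTheorem3
  (R : realType) (d : Order.disp_t) (E : ctbDistrLatticeType d)
  (T : comAlgType R) (Omega : Type)
  (truth : E -> Omega -> bool) (AV : Omega -> T -> R)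
  (I : E -> T) (PV : T -> E -> R)
  (* E is a Boolean algebra of propositions, interpreted in states *)
  (truth_meet : forall A B w, truth (Order.meet A B) w = truth A w && truth B w)
  (truth_compl : forall A w, truth (Order.compl A) w = ~~ truth A w)
  (truth_nonzero : forall A, A != Order.bottom -> exists w, truth A w)
  (* AV is (in each state) a retraction of T onto R *)
  (AV_R : forall w (r : R), AV w r%:A = r)
  (* indicators *)
  (AV_I : forall w A, AV w (I A) = (if truth A w then 1 else 0))
  (I_top : I Order.top = 1)
  (I_meet : forall A B, I (Order.meet A B) = I A * I B)
  (I_compl : forall A, I (Order.compl A) = 1 - I A)
  (* axioms (i)-(v) on PV *)
  (PV_i : forall (X : T) (s : R) (A : E), A != Order.bottom ->
     implies_AV truth A (fun w => AV w X = s) -> PV X A = s)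
  (PV_ii : forall (X Y : T) (A : E), A != Order.bottom ->
     implies_AV truth A (fun w => AV w X = AV w Y) -> PV X A = PV Y A)
  (PV_iii : forall (X Y : T) (C : E), C != Order.bottom ->
     implies_AV truth C (fun w => AV w X <= AV w Y) -> PV X C <= PV Y C)
  (PV_iv : forall (r : R) (C : E) (X Y : T), C != Order.bottom ->
     PV X C = PV Y C -> PV (r *: X) C = PV (r *: Y) C)
  (PV_v : forall (A C : E) (X1 X2 : T), Order.meet A C != Order.bottom ->
     PV X1 (Order.meet A C) = PV X2 (Order.meet A C) ->
     PV (X1 * I A) C = PV (X2 * I A) C) :
  forall A B C : E, Order.meet B C != Order.bottom ->
    PL PV I (Order.meet A B) C = PL PV I A (Order.meet B C) * PL PV I B C.
Proof.
move=> A B C hBC.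
by rewrite /PL I_meet (PV_mul_indicator AV_R PV_i PV_iv PV_v).
Qed.
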